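(* Let $G=(V,E)$ be a graph and $v\in V$. Then $F_v=\emptyset$ if and only if $(e,e')\in\mathfrak d_v^*$ for all edges $e,e'\in E_v$. Moreover, if $F_v\neq\emptyset$, then $|F_v|\geq 2$.
   Context: All graphs are finite, simple and undirected. For a graph $G=(V,E)$ and $v\in V$, $E_v$ denotes the set of edges incident to $v$. For two distinct adjacent edges $e=(v,u)$, $f=(v,w)$, a square spanned by $e$ and $f$ is a $4$-cycle $v,u,x,w,v$ in $G$ with $x\notin\{v,u,w\}$; $x$ is its top vertex. The square is chordless if neither $(u,w)$ nor $(v,x)$ is an edge of $G$. In a chordless square $v,u,x,w$, the edge $(x,w)$ is the opposite edge of $(v,u)$ and $(x,u)$ is the opposite edge of $(v,w)$ (and vice versa). The relation $\delta(G)\subseteq E\times E$: $(e,f)\in\delta(G)$ iff (i) $e,f$ are distinct adjacent edges and it is not the case that $e$ and $f$ span exactly one square and that square is chordless; or (ii) $e$ and $f$ are opposite edges of a chordless square; or (iii) $e=f$. For a reflexive symmetric relation $R$ on a set, $R^*$ denotes its transitive closure, i.e. the finest equivalence relation containing $R$. Define $\mathfrak d_v=((E_v\times E)\cup(E\times E_v))\cap\delta(G)$, and $\mathfrak d_v^*$ the finest equivalence relation on $E$ containing $\mathfrak d_v$. Let $F_v\subseteq E\setminus E_v$ be the set of edges that are the edges not incident to $v$ of some chordless square spanned by two edges $e,e'\in E_v$ with $(e,e')\notin\mathfrak d_v^*$. *)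

(* A simple graph on a finite vertex type T is a boolean
   relation adj : rel T, assumed symmetric and irreflexive in the theorem.
   Edges are represented as 2-element vertex sets {x, y} with adj x y. *)
From mathcomp Require Import all_boot.
Set Implicit Arguments. Unset Strict Implicit. Unset Printing Implicit Defensive.

Section Graph.
Variables (T : finType) (adj : rel T).

Definition is_edge (A : {set T}) : bool :=
  [exists x, exists y, adj x y && (A == [set x; y])].

(* tops of the squares spanned by (v,u) and (v,w): vertices x with
   v,u,x,w a 4-cycle and x \notin {v,u,w} *)
Definition sq_tops (v u w : T) : {set T} :=
  [set x | [&& adj u x, adj w x, x != v, x != u & x != w]].

Definition one_chordless_square (v u w : T) : bool :=
  [&& #|sq_tops v u w| == 1, ~~ adj u w & [forall x in sq_tops v u w, ~~ adj v x]].

Definition delta_adj (e f : {set T}) : bool :=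
  [exists v, exists u, exists w,
    [&& adj v u, adj v w, u != w, e == [set v; u], f == [set v; w]
      & ~~ one_chordless_square v u w]].

Definition opposite (e f : {set T}) : bool :=
  [exists a, exists b, exists c, exists d,
    [&& adj a b, adj b c, adj c d, adj d a,
        uniq [:: a; b; c; d], ~~ adj a c, ~~ adj b d,
        e == [set a; b] & f == [set c; d]]].

Definition delta (e f : {set T}) : bool :=
  [&& is_edge e, is_edge f & [|| delta_adj e f, opposite e f | e == f]].

Definition dv (v : T) : rel {set T} :=
  fun e f => delta e f && ((v \in e) || (v \in f)).

(* d_v^* : finest equivalence containing d_v (dv is symmetric, so its
   reflexive-transitive closure is this equivalence; on edges it agrees
   with the equivalence relation on E) *)
Definition dvstar (v : T) : rel {set T} := connect (dv v).

Definition Fv (v : T) : {set {set T}} :=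
  [set g | [exists u, exists w, exists x,
     [&& adj v u, adj v w, u != w, adj u x, adj w x,
         x \notin [:: v; u; w], ~~ adj u w, ~~ adj v x,
         ~~ dvstar v [set v; u] [set v; w]
       & (g == [set u; x]) || (g == [set w; x])]]].

End Graph.

From mathcomp Require Import all_boot.

(* Every edge at v has the form {v,u} with u a neighbour of v
   (a "spoke").  If two distinct spokes {v,u}, {v,w} are not d_v^*-related,
   then in particular they are not d_v-related; as both contain v, clause (i)
   of delta must fail, i.e. they span exactly one square v,u,x,w and that
   square is chordless.  Its two edges {u,x}, {w,x} away from v then lie in
   F_v.  Conversely, by definition every element of F_v comes with a pair of
   spokes that are not d_v^*-related.  This gives the equivalence, and since
   u <> w the edges {u,x} and {w,x} are distinct, so a nonempty F_v has at
   least two elements. *)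

Set Implicit Arguments.
Unset Strict Implicit.
Unset Printing Implicit Defensive.

Lemma set2_neq_left (T : finType) (u w x : T) :
  u != w -> u != x -> [set u; x] != [set w; x].
Proof.
move=> neq_uw neq_ux; apply/negP => /eqP eq_sets.
have : u \in [set w; x] by rewrite -eq_sets set21.
by rewrite !inE (negbTE neq_uw) (negbTE neq_ux).
Qed.

Section Spokes.
Variables (T : finType) (adj : rel T).
Hypothesis adj_sym : symmetric adj.

Lemma is_edge2 (a b : T) : adj a b -> is_edge adj [set a; b].
Proof.
by move=> ab; apply/existsP; exists a; apply/existsP; exists b; rewrite ab eqxx.
Qed.

Lemma edge_at (v : T) (e : {set T}) :
  is_edge adj e -> v \in e -> exists2 u, adj v u & e = [set v; u].
Proof.
case/existsP=> x /existsP [y /andP [xy /eqP ->]].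
rewrite !inE => /orP [/eqP ->|/eqP ->]; first by exists y.
by exists x; [rewrite adj_sym | rewrite setUC].
Qed.

Lemma dv_spokes (v u w : T) :
  adj v u -> adj v w -> u != w -> ~~ one_chordless_square adj v u w ->
  dv adj v [set v; u] [set v; w].
Proof.
move=> vu vw neq_uw not_oc.
rewrite /dv /delta (is_edge2 vu) (is_edge2 vw) set21 andbT /=.
apply/orP; left; apply/existsP; exists v; apply/existsP; exists u.
by apply/existsP; exists w; rewrite vu vw neq_uw !eqxx not_oc.
Qed.

Lemma unrelated_spokes_square (v u w : T) :
  adj v u -> adj v w -> u != w -> ~~ dvstar adj v [set v; u] [set v; w] ->
  one_chordless_square adj v u w.
Proof.
move=> vu vw neq_uw not_rel; apply/negPn/negP => not_oc.
by rewrite /dvstar (connect1 (dv_spokes vu vw neq_uw not_oc)) in not_rel.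
Qed.

Lemma chordless_square_top (v u w : T) :
  one_chordless_square adj v u w ->
  exists x, [/\ adj u x, adj w x, x \notin [:: v; u; w], ~~ adj u w
              & ~~ adj v x].
Proof.
case/and3P=> /cards1P [x tops_x] not_uw /forallP not_vtop.
have x_top : x \in sq_tops adj v u w by rewrite tops_x set11.
have := not_vtop x; rewrite x_top /= => not_vx.
move: x_top; rewrite inE => /and5P [ux wx neq_xv neq_xu neq_xw].
by exists x; split; rewrite // !inE (negbTE neq_xv) (negbTE neq_xu) (negbTE neq_xw).
Qed.

Lemma Fv_square_edges (v u w x : T) :
  adj v u -> adj v w -> u != w -> adj u x -> adj w x ->
  x \notin [:: v; u; w] -> ~~ adj u w -> ~~ adj v x ->
  ~~ dvstar adj v [set v; u] [set v; w] ->
  [/\ [set u; x] \in Fv adj v, [set w; x] \in Fv adj v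
    & [set u; x] != [set w; x]].
Proof.
move=> vu vw neq_uw ux wx x_out not_uw not_vx not_rel.
have in_Fv g : (g == [set u; x]) || (g == [set w; x]) -> g \in Fv adj v.
  move=> g_edge; rewrite inE; apply/existsP; exists u; apply/existsP; exists w.
  by apply/existsP; exists x; rewrite vu vw neq_uw ux wx x_out not_uw not_vx not_rel g_edge.
split; [by apply: in_Fv; rewrite eqxx | by apply: in_Fv; rewrite eqxx orbT |].
apply: set2_neq_left => //; rewrite eq_sym.
by apply: contra x_out => /eqP ->; rewrite !inE eqxx orbT.
Qed.

Lemma Fv_mem_square (v : T) (g : {set T}) :
  g \in Fv adj v ->
  exists u w x, [/\ adj v u, adj v w, u != w, adj u x & adj w x] /\
    [/\ x \notin [:: v; u; w], ~~ adj u w, ~~ adj v x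
      & ~~ dvstar adj v [set v; u] [set v; w]].
Proof.
rewrite inE => /existsP [u /existsP [w /existsP [x]]].
case/and5P=> vu vw neq_uw ux /and5P [wx x_out not_uw not_vx /andP [not_rel _]].
by exists u, w, x.
Qed.

End Spokes.

Theorem lemma3p1 (T : finType) (adj : rel T)
    (adj_sym : symmetric adj) (adj_irr : irreflexive adj) (v : T) :
  (Fv adj v = set0 <->
     (forall e e' : {set T}, is_edge adj e -> is_edge adj e' ->
        v \in e -> v \in e' -> dvstar adj v e e'))
  /\ (Fv adj v != set0 -> 2 <= #|Fv adj v|).
Proof.
split; first split.
- move=> Fv0 e e' e_edge e'_edge v_e v_e'.
  have [u vu ->] := edge_at adj_sym e_edge v_e.
  have [w vw ->] := edge_at adj_sym e'_edge v_e'.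
  have [<-|neq_uw] := eqVneq u w; first exact: connect0.
  apply/negPn/negP => not_rel.
  have [x [ux wx x_out not_uw not_vx]] :=
    chordless_square_top (unrelated_spokes_square vu vw neq_uw not_rel).
  have [ux_Fv _ _] := Fv_square_edges vu vw neq_uw ux wx x_out not_uw not_vx not_rel.
  by rewrite Fv0 inE in ux_Fv.
- move=> all_rel; apply/setP=> g; rewrite in_set0; apply/negP => /Fv_mem_square.
  move=> [u [w [x [[vu vw _ _ _] [_ _ _ not_rel]]]]].
  by rewrite all_rel ?is_edge2 ?set21 in not_rel.
- case/set0Pn=> g /Fv_mem_square [u [w [x [[vu vw neq_uw ux wx] [x_out not_uw not_vx not_rel]]]]].
  have [ux_Fv wx_Fv neq_edges] :=
    Fv_square_edges vu vw neq_uw ux wx x_out not_uw not_vx not_rel.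
  have two_sub : [set [set u; x]; [set w; x]] \subset Fv adj v.
    by apply/subsetP=> g' /set2P [->|->].
  by apply: leq_trans (subset_leq_card two_sub); rewrite cards2 neq_edges.
Qed.
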